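(* Let $N_{\mathrm{rx}}, N_{\mathrm{UE}} \ge 1$ and $1 \le r \le N_{\mathrm{rx}}$ be integers. For $j = 1,\dots,N_{\mathrm{UE}}$ let $\mathbf{Q}_j \in \mathbb{C}^{N_{\mathrm{rx}}\times N_{\mathrm{rx}}}$ be Hermitian positive semidefinite matrices and $\alpha_j > 0$ real numbers. Define $$\mathbf{Q} := \mathbf{I} + \sum_{j=1}^{N_{\mathrm{UE}}} \alpha_j \mathbf{Q}_j, \qquad \mathbf{R}_i := \mathbf{Q} - \alpha_i \mathbf{Q}_i = \mathbf{I} + \sum_{j\neq i}\alpha_j \mathbf{Q}_j$$ for a fixed index $i$. For an $r \times N_{\mathrm{rx}}$ complex matrix $\mathbf{G}$ of full row rank $r$, define $\tilde{\mathbf{R}}_i(\mathbf{G}) := \mathbf{G}\mathbf{R}_i\mathbf{G}^{\mathsf H}$ and $$\overline{C}_i(\mathbf{G}) := \log_2 \det\!\Big(\mathbf{I} + \mathbf{G}\mathbf{Q}_i\mathbf{G}^{\mathsf H}\,\tilde{\mathbf{R}}_i(\mathbf{G})^{-1}\Big).$$ Then a maximizer of $\overline{C}_i(\mathbf{G})$ over all such $\mathbf{G}$ is $$\mathbf{G}_i = \big[\mathbf{Q}_i^{1/2}\mathbf{Q}^{-1/2}\big]_r\,\mathbf{Q}^{-1/2},$$ where for a matrix $\mathbf{A}$, $[\mathbf{A}]_r$ denotes the $r\times N_{\mathrm{rx}}$ matrix whose rows are the (conjugate-transposed) right singular vectors of $\mathbf{A}$ corresponding to its $r$ largest singular values.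
   Context: $\mathbf{Q}_i^{1/2}$ denotes the Hermitian positive semidefinite square root of $\mathbf{Q}_i$, and $\mathbf{Q}^{-1/2}$ the inverse of the Hermitian positive definite square root of $\mathbf{Q}$ (note $\mathbf{Q} \succeq \mathbf{I}$). If $\mathbf{A} = \mathbf{U}\boldsymbol{\Sigma}\mathbf{V}^{\mathsf H}$ is a singular value decomposition with singular values in nonincreasing order, $[\mathbf{A}]_r$ is the matrix formed by the first $r$ rows of $\mathbf{V}^{\mathsf H}$. Superscript $\mathsf H$ denotes conjugate transpose. (Interpretation: $\mathbf{Q}_j$ is the spatial covariance of the uplink channel of user $j$, $\alpha_j$ its transmit SNR, $\mathbf{G}$ a rank-$r$ receive projection for user $i$, and $\overline{C}_i$ a Jensen upper bound on the ergodic capacity of the projected system.) *)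

From mathcomp Require Import all_boot all_algebra.
From mathcomp Require Import all_classical all_reals all_analysis.
From mathcomp Require Export complex.
Set Implicit Arguments. Unset Strict Implicit. Unset Printing Implicit Defensive.
Import GRing.Theory Num.Theory.
Local Open Scope ring_scope.
Local Open Scope complex_scope.

Definition ctrmx (R : realType) (m n : nat) (A : 'M[R[i]]_(m, n)) : 'M[R[i]]_(n, m) :=
  (map_mx Num.conj A)^T.

Definition hermitian (R : realType) (n : nat) (A : 'M[R[i]]_n) : Prop :=
  ctrmx A = A.

Definition psd (R : realType) (n : nat) (A : 'M[R[i]]_n) : Prop :=
  hermitian A /\ forall v : 'cV[R[i]]_n, 0 <= (ctrmx v *m A *m v) 0 0.

Definition pd (R : realType) (n : nat) (A : 'M[R[i]]_n) : Prop :=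
  hermitian A /\ forall v : 'cV[R[i]]_n, v != 0 -> 0 < (ctrmx v *m A *m v) 0 0.

Definition unitary (R : realType) (n : nat) (U : 'M[R[i]]_n) : Prop :=
  U *m ctrmx U = 1%:M /\ ctrmx U *m U = 1%:M.

Definition is_psd_sqrt (R : realType) (n : nat) (A S : 'M[R[i]]_n) : Prop :=
  psd S /\ S *m S = A.

Definition is_svd (R : realType) (n : nat) (A U V : 'M[R[i]]_n) (s : 'I_n -> R) : Prop :=
  [/\ unitary U, unitary V,
      (forall k, 0 <= s k),
      (forall k l : 'I_n, (k <= l)%N -> s l <= s k) &
      A = U *m diag_mx (\row_k (s k)%:C) *m ctrmx V].

(* [A]_r given the SVD factor V: the first r rows of V^H *)
Definition first_rows (R : realType) (n r : nat) (Hr : (r <= n)%N)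
  (Vh : 'M[R[i]]_n) : 'M[R[i]]_(r, n) :=
  rowsub (widen_ord Hr) Vh.

Definition Qsum (R : realType) (n K : nat) (alpha : 'I_K -> R)
  (Q : 'I_K -> 'M[R[i]]_n) : 'M[R[i]]_n :=
  1%:M + \sum_(j < K) (alpha j)%:C *: Q j.

Definition Rint (R : realType) (n K : nat) (alpha : 'I_K -> R)
  (Q : 'I_K -> 'M[R[i]]_n) (i : 'I_K) : 'M[R[i]]_n :=
  Qsum alpha Q - (alpha i)%:C *: Q i.

Definition log2 (R : realType) (x : R) : R := ln x / ln 2.

(* Cbar_i(G) = log2 det(I + G Q_i G^H (G R_i G^H)^{-1}); the determinant is real
   positive for full-row-rank G, we take log2 of its real part. *)
Definition Cbar (R : realType) (n K r : nat) (alpha : 'I_K -> R)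
  (Q : 'I_K -> 'M[R[i]]_n) (i : 'I_K) (G : 'M[R[i]]_(r, n)) : R :=
  log2 (complex.Re (\det (1%:M + G *m Q i *m ctrmx G
                             *m invmx (G *m Rint alpha Q i *m ctrmx G)))).

(* Whitening by T := V^H S^-1, where S^2 = Q and S_i S^-1 = U diag(s) V^H,
   diagonalises everything at once: T Q T^H = I and T Q_i T^H = diag(s_k^2),
   hence T R_i T^H = diag(c_k) with c_k = 1 - alpha_i s_k^2 > 0.  Writing
   G = H T with H := G S V, the objective becomes the log2 of
   det(H diag(a) H^H) / det(H diag(c) H^H), where a_k = c_k + s_k^2.  By
   Cauchy-Binet both determinants are combinations, with the same nonnegative
   weights |det H_g|^2, of the products of a (resp. c) over r-subsets g of the
   indices.  Since a_k / c_k is nonincreasing, each such quotient is at most the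
   one over the first r indices, which is the value at G_i: its H consists of
   the first r rows of the identity. *)

From Pilot Require Import Defs.
From mathcomp Require Import all_boot all_order all_fingroup all_algebra.
From mathcomp Require Import all_classical all_reals all_analysis.
From mathcomp Require Import complex.
From mathcomp Require Import zify lra.
Set Implicit Arguments. Unset Strict Implicit. Unset Printing Implicit Defensive.
Import Order.TTheory GRing.Theory Num.Theory.
Local Open Scope complex_scope.
Local Open Scope ring_scope.

Section CauchyBinet.
Variable K : comPzRingType.

Lemma det_mulmx_sum_ffun r n (X : 'M[K]_(r, n)) (Y : 'M[K]_(n, r)) :
  \det (X *m Y) =
  \sum_(g : {ffun 'I_r -> 'I_n}) (\prod_i X i (g i)) * \det (rowsub g Y).
Proof.
rewrite /determinant.
transitivity (\sum_(t : 'S_r) \sum_(g : {ffun 'I_r -> 'I_n})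
   (-1) ^+ t * ((\prod_i X i (g i)) * \prod_i Y (g i) (t i))).
  apply: eq_bigr => t _; rewrite -big_distrr /=; congr (_ * _).
  under eq_bigr do rewrite mxE.
  by rewrite bigA_distr_bigA /=; apply: eq_bigr => g _; rewrite big_split.
rewrite exchange_big /=; apply: eq_bigr => g _.
rewrite big_distrr /=; apply: eq_bigr => t _.
by rewrite mulrCA; congr (_ * (_ * _)); apply: eq_bigr => i _; rewrite mxE.
Qed.

(* Summing over all maps [g] rather than over increasing ones counts every
   [r]-subset of columns [r!] times, which spares us ordering the subsets. *)
Lemma cauchy_binet_ffun r n (X : 'M[K]_(r, n)) (Y : 'M[K]_(n, r)) :
  r`!%:R * \det (X *m Y) =
  \sum_(g : {ffun 'I_r -> 'I_n}) \det (colsub g X) * \det (rowsub g Y).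
Proof.
have detXY_perm (t : 'S_r) : \det (X *m Y) = \sum_(g : {ffun 'I_r -> 'I_n})
    (-1) ^+ t * ((\prod_i X i (g (t i))) * \det (rowsub g Y)).
  rewrite det_mulmx_sum_ffun.
  pose h (g : {ffun 'I_r -> 'I_n}) : {ffun 'I_r -> 'I_n} := [ffun i => g (t i)].
  have h_inj : injective h.
    move=> g1 g2 /ffunP E; apply/ffunP => i.
    by have := E (t^-1 i)%g; rewrite !ffunE permKV.
  rewrite (reindex_inj h_inj) /=; apply: eq_bigr => g _.
  rewrite mulrCA; congr (_ * _); first by apply: eq_bigr => i _; rewrite ffunE.
  have -> : rowsub (h g) Y = row_perm t (rowsub g Y).
    by apply/matrixP => i j; rewrite !mxE ffunE.
  by rewrite row_permE det_mulmx det_perm.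
rewrite (_ : r`!%:R * _ = \sum_(t : 'S_r) \det (X *m Y)); last first.
  by rewrite sumr_const card_Sn mulr_natl.
under eq_bigr => t _ do rewrite (detXY_perm t).
rewrite exchange_big; apply: eq_bigr => g _ /=; under eq_bigr do rewrite mulrA.
rewrite -big_distrl /=; congr (_ * _).
by apply: eq_bigr => t _; congr (_ * _); apply: eq_bigr => i _; rewrite mxE.
Qed.

Lemma det_colsub_eq0 r n (X : 'M[K]_(r, n)) (g : 'I_r -> 'I_n) :
  ~~ injectiveb g -> \det (colsub g X) = 0.
Proof.
move=> /injectivePn [k1 [k2 k12 g12]].
by rewrite -det_tr; apply: (determinant_alternate k12) => j; rewrite !mxE g12.
Qed.

End CauchyBinet.

Section ProductOfLargest.
Variable R : numDomainType.

Lemma prod_uniq_le_prod_prefix (f : nat -> R) n (s : seq nat) :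
  (forall k, (k < n)%N -> 0 <= f k) ->
  (forall k l, (k <= l)%N -> (l < n)%N -> f l <= f k) ->
  uniq s -> all (fun k => k < n)%N s ->
  \prod_(k <- s) f k <= \prod_(k < size s) f k.
Proof.
elim: n s => [|n IH] s f_ge0 f_mono s_uniq s_lt.
  by case: s s_lt s_uniq => [|x s] //=; rewrite big_nil big_ord0.
have f_ge0' k : (k < n)%N -> 0 <= f k by move=> kn; apply: f_ge0; lia.
have f_mono' k l : (k <= l)%N -> (l < n)%N -> f l <= f k.
  by move=> kl ln; apply: f_mono => //; lia.
have [ns|ns] := boolP (n \in s); last first.
  apply: IH => //; apply/allP => x xs.
  have := allP s_lt x xs; have : x != n by apply: contraNneq ns => <-.
  move=> /eqP /= xn xn1; lia.
have s_rem := perm_to_rem ns.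
rewrite (perm_big _ s_rem) big_cons (perm_size s_rem) /= big_ord_recr /=.
set m := size (rem n s).
have rem_lt : all (fun k => k < n)%N (rem n s).
  apply/allP => x; rewrite mem_rem_uniq // inE => /andP [/eqP xn xs].
  by have /= := allP s_lt x xs; lia.
have size_s : (size s <= n.+1)%N.
  rewrite -[n.+1](size_iota 0); apply: uniq_leq_size => // x xs.
  by rewrite mem_iota /=; have := allP s_lt x xs.
have m_le_n : (m <= n)%N by have := perm_size s_rem; rewrite /= -/m; lia.
have prefix_ge0 : 0 <= \prod_(k < m) f k.
  by apply: prodr_ge0 => k _; apply: f_ge0; have := ltn_ord k; lia.
apply: (@le_trans _ _ (f n * \prod_(k < m) f k)).
  by apply: ler_wpM2l; [apply: f_ge0 | apply: IH; rewrite ?rem_uniq].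
by rewrite mulrC; apply: ler_wpM2l => //; apply: f_mono.
Qed.

Lemma prod_inj_le_prod_widen n r (Hr : (r <= n)%N) (f : 'I_n -> R)
    (g : 'I_r -> 'I_n) :
  (forall k, 0 <= f k) -> (forall k l : 'I_n, (k <= l)%N -> f l <= f k) ->
  injective g ->
  \prod_i f (g i) <= \prod_(i < r) f (widen_ord Hr i).
Proof.
move=> f_ge0 f_mono g_inj.
pose fn (k : nat) := oapp f 0 (insub k).
have fnE (k : 'I_n) : fn k = f k by rewrite /fn valK.
pose s := [seq val (g i) | i <- enum 'I_r].
have size_s : size s = r by rewrite size_map size_enum_ord.
have -> : \prod_i f (g i) = \prod_(k <- s) fn k.
  by rewrite big_map big_enum /=; apply: eq_bigr => i _; rewrite fnE.
have -> : \prod_(i < r) f (widen_ord Hr i) = \prod_(k < size s) fn k.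
  by rewrite size_s; apply: eq_bigr => i _; rewrite -(fnE (widen_ord Hr i)).
apply: (@prod_uniq_le_prod_prefix fn n).
- by move=> k kn; rewrite -[k]/(val (Ordinal kn)) fnE.
- move=> k l kl ln; have kn : (k < n)%N by lia.
  by rewrite -[k]/(val (Ordinal kn)) -[l]/(val (Ordinal ln)) !fnE; apply: f_mono.
- by rewrite map_inj_uniq ?enum_uniq // => x y /val_inj /g_inj.
- by apply/allP => x /mapP [i _ ->] /=.
Qed.

End ProductOfLargest.

Lemma prod_inj_cross_le (R : numFieldType) n r (Hr : (r <= n)%N)
    (a c : 'I_n -> R) (g : 'I_r -> 'I_n) :
  (forall k, 0 < a k) -> (forall k, 0 < c k) ->
  (forall k l : 'I_n, (k <= l)%N -> a l / c l <= a k / c k) -> injective g ->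
  \prod_(k < r) c (widen_ord Hr k) * \prod_i a (g i) <=
  \prod_(k < r) a (widen_ord Hr k) * \prod_i c (g i).
Proof.
move=> a_gt0 c_gt0 ac_mono g_inj; pose f k := a k / c k.
have aE k : a k = f k * c k by rewrite divfK // gt_eqF.
rewrite (eq_bigr _ (fun i _ => aE (g i))).
rewrite (eq_bigr _ (fun k _ => aE (widen_ord Hr k))).
rewrite !big_split mulrCA -[X in _ <= X]mulrA ler_wpM2r //.
  by rewrite mulr_ge0 // prodr_ge0 // => k _; rewrite ltW.
rewrite -!big_split; apply: (@prod_inj_le_prod_widen _ _ _ Hr f) => // k.
by rewrite ltW // divr_gt0.
Qed.

Local Notation rdiag d := (diag_mx (\row_k ((d k)%:C))).

Section ComplexMatrices.
Variable R : realType.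
Local Notation C := R[i].

Lemma conjC_real_complex (x : R) : (x%:C : C)^* = x%:C.
Proof. exact: conjc_real. Qed.

Lemma ctrmxM m n p (A : 'M[C]_(m, n)) (B : 'M[C]_(n, p)) :
  ctrmx (A *m B) = ctrmx B *m ctrmx A.
Proof. by rewrite /ctrmx map_mxM trmx_mul. Qed.

Lemma ctrmxK m n (A : 'M[C]_(m, n)) : ctrmx (ctrmx A) = A.
Proof. by apply/matrixP => i j; rewrite !mxE conjCK. Qed.

Lemma ctrmx_inv n (A : 'M[C]_n) : ctrmx (invmx A) = invmx (ctrmx A).
Proof. by rewrite /ctrmx map_invmx trmx_inv. Qed.

Lemma ctrmx_rdiag n (d : 'I_n -> R) : ctrmx (rdiag d) = rdiag d.
Proof.
apply/matrixP => i j; rewrite !mxE eq_sym.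
by case: eqP => [->|_] /=; rewrite ?mulr1n ?mulr0n ?conjC0 ?conjC_real_complex.
Qed.

Lemma det_ctrmx n (A : 'M[C]_n) : \det (ctrmx A) = (\det A)^*.
Proof. by rewrite /ctrmx det_tr det_map_mx. Qed.

Lemma rowsub_ctrmx r n (g : 'I_r -> 'I_n) (A : 'M[C]_(r, n)) :
  rowsub g (ctrmx A) = ctrmx (colsub g A).
Proof. by apply/matrixP => i j; rewrite !mxE. Qed.

Lemma rdiag_mul n (d1 d2 : 'I_n -> R) :
  rdiag d1 *m rdiag d2 = rdiag (fun k => d1 k * d2 k).
Proof.
apply/matrixP => i j; rewrite mul_diag_mx !mxE.
by case: eqP => [->|_]; rewrite ?mulr1n ?mulr0n ?mulr0 // rmorphM.
Qed.

Lemma rdiag_add n (d1 d2 : 'I_n -> R) :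
  rdiag d1 + rdiag d2 = rdiag (fun k => d1 k + d2 k).
Proof.
apply/matrixP => i j; rewrite !mxE.
by case: eqP => [->|_]; rewrite ?mulr1n ?mulr0n ?addr0 // rmorphD.
Qed.

Lemma subr_scale_rdiag n (x : R) (d : 'I_n -> R) :
  1%:M - x%:C *: rdiag d = rdiag (fun k => 1 - x * d k).
Proof.
apply/matrixP => i j; rewrite !mxE.
by case: eqP => [->|_]; rewrite ?mulr1n ?mulr0n ?mulr0 ?subr0 // rmorphB rmorphM.
Qed.

Lemma qf_psd n (v : 'rV[C]_n) (M : 'M[C]_n) :
  psd M -> 0 <= (v *m M *m ctrmx v) 0 0.
Proof. by move=> [_ /(_ (ctrmx v))]; rewrite ctrmxK. Qed.

Lemma qf_rdiag_gt0 n (v : 'rV[C]_n) (d : 'I_n -> R) :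
  (forall k, 0 < d k) -> v != 0 -> 0 < (v *m rdiag d *m ctrmx v) 0 0.
Proof.
move=> d_gt0 v_neq0.
have [k vk_neq0] : exists k, v 0 k != 0.
  apply/existsP; apply: contraR v_neq0 => /existsPn v0.
  by apply/eqP/matrixP => i j; rewrite ord1 mxE; exact/eqP/negbNE/v0.
rewrite mul_mx_diag mxE (bigD1 k) //= !mxE.
have term_ge0 j : 0 <= v 0 j * (d j)%:C * (v 0 j)^*.
  by rewrite -mulrA mulrCA mulr_ge0 ?mul_conjC_ge0 // ler0c ltW.
apply: ltr_wpDr; first by apply: sumr_ge0 => j _; rewrite !mxE.
by rewrite -mulrA mulrCA mulr_gt0 ?mul_conjC_gt0 // ltcR.
Qed.

Lemma qf_id_gt0 n (v : 'rV[C]_n) : v != 0 -> 0 < (v *m ctrmx v) 0 0.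
Proof.
move=> v_neq0; have := @qf_rdiag_gt0 n v (fun _ => 1) (fun _ => ltr01) v_neq0.
suff -> : v *m rdiag (fun=> 1 : R) = v by [].
by apply/matrixP => i j; rewrite mul_mx_diag !mxE mulr1.
Qed.

Lemma qf_pd_unit n (M : 'M[C]_n) :
  (forall v : 'rV_n, v != 0 -> 0 < (v *m M *m ctrmx v) 0 0) -> M \in unitmx.
Proof.
move=> M_pd; rewrite unitmxE unitfE; apply/negP => /det0P [v v_neq0 vM].
by have := M_pd v v_neq0; rewrite vM mul0mx mxE ltxx.
Qed.

Lemma qf_delta n (k : 'I_n) (M : 'M[C]_n) :
  ((delta_mx 0 k : 'rV[C]_n) *m M *m ctrmx (delta_mx 0 k : 'rV[C]_n)) 0 0
  = M k k.
Proof.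
have -> : ctrmx (delta_mx 0 k : 'rV[C]_n) = delta_mx k 0.
  apply/matrixP => i j; rewrite !mxE andbC.
  by case: (_ && _); rewrite ?conjC0 ?conjC1.
by rewrite -rowE -colE !mxE.
Qed.

End ComplexMatrices.

Section GramDeterminants.
Variable R : realType.
Local Notation C := R[i].

Lemma cauchy_binet_gram_rdiag r n (H : 'M[C]_(r, n)) (d : 'I_n -> R) :
  r`!%:R * \det (H *m rdiag d *m ctrmx H) =
  \sum_(g : {ffun 'I_r -> 'I_n})
     (\prod_i (d (g i))%:C) * (\det (colsub g H) * (\det (colsub g H))^*).
Proof.
rewrite cauchy_binet_ffun; apply: eq_bigr => g _.
rewrite rowsub_ctrmx det_ctrmx mulrA; congr (_ * _).
have -> : colsub g (H *m rdiag d) = colsub g H *m rdiag (fun i => d (g i)).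
  by apply/matrixP => i j; rewrite !mul_mx_diag !mxE.
rewrite det_mulmx det_diag mulrC; congr (_ * _).
by apply: eq_bigr => i _; rewrite mxE.
Qed.

Lemma gram_rdiag_unit r n (H : 'M[C]_(r, n)) (d : 'I_n -> R) :
  (forall k, 0 < d k) -> row_free H -> H *m rdiag d *m ctrmx H \in unitmx.
Proof.
move=> d_gt0 H_free; apply: qf_pd_unit => v v_neq0.
rewrite (_ : v *m _ *m _ = (v *m H) *m rdiag d *m ctrmx (v *m H)).
  by apply: qf_rdiag_gt0; rewrite ?mulmx_free_eq0.
by rewrite ctrmxM !mulmxA.
Qed.

Lemma det_gram_rdiag_gt0 r n (H : 'M[C]_(r, n)) (d : 'I_n -> R) :
  (forall k, 0 < d k) -> row_free H -> 0 < \det (H *m rdiag d *m ctrmx H).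
Proof.
move=> d_gt0 H_free; rewrite lt_def -unitfE -unitmxE gram_rdiag_unit //=.
have fact_gt0C : 0 < r`!%:R :> C by rewrite ltr0n fact_gt0.
rewrite -(pmulr_rge0 _ fact_gt0C) cauchy_binet_gram_rdiag; apply: sumr_ge0 => g _.
rewrite mulr_ge0 ?mul_conjC_ge0 //.
by apply: prodr_ge0 => i _; rewrite ler0c ltW.
Qed.

Definition gram_det_ratio r n (a c : 'I_n -> R) (H : 'M[C]_(r, n)) : C :=
  \det (H *m rdiag a *m ctrmx H) / \det (H *m rdiag c *m ctrmx H).

Lemma gram_det_ratio_gt0 r n (a c : 'I_n -> R) (H : 'M[C]_(r, n)) :
  (forall k, 0 < a k) -> (forall k, 0 < c k) -> row_free H ->
  0 < gram_det_ratio a c H.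
Proof. by move=> a_gt0 c_gt0 H_free; rewrite divr_gt0 ?det_gram_rdiag_gt0. Qed.

Lemma first_rows_mul r n (Hr : (r <= n)%N) (A B : 'M[C]_n) :
  first_rows Hr A *m B = first_rows Hr (A *m B).
Proof. exact: mul_rowsub_mx. Qed.

Lemma first_rows1_free r n (Hr : (r <= n)%N) :
  row_free (first_rows Hr (1%:M : 'M[C]_n)).
Proof.
apply/row_freeP; exists (colsub (widen_ord Hr) 1%:M).
by rewrite mulmx_colsub mulmx1; apply/matrixP => i j; rewrite !mxE.
Qed.

Lemma gram_first_rows1 r n (Hr : (r <= n)%N) (M : 'M[C]_n) :
  first_rows Hr 1%:M *m M *m ctrmx (first_rows Hr 1%:M) =
  mxsub (widen_ord Hr) (widen_ord Hr) M.
Proof.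
have -> : ctrmx (first_rows Hr (1%:M : 'M[C]_n)) = colsub (widen_ord Hr) 1%:M.
  apply/matrixP => i j; rewrite !mxE eq_sym.
  by case: (_ == _); rewrite ?conjC0 ?conjC1.
rewrite -mulmxA mulmx_colsub mulmx1 /first_rows mul_rowsub_mx mul1mx.
by apply/matrixP => i j; rewrite !mxE.
Qed.

Lemma gram_det_ratio_first_rows1 r n (Hr : (r <= n)%N) (a c : 'I_n -> R) :
  gram_det_ratio a c (first_rows Hr 1%:M) =
  (\prod_(k < r) a (widen_ord Hr k) / \prod_(k < r) c (widen_ord Hr k))%:C.
Proof.
have sub_rdiag d : mxsub (widen_ord Hr) (widen_ord Hr) (rdiag d) =
    rdiag (fun k => d (widen_ord Hr k)).
  by apply/matrixP => i j; rewrite !mxE.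
rewrite /gram_det_ratio !gram_first_rows1 !sub_rdiag !det_diag fmorph_div.
by rewrite !rmorph_prod; congr (_ / _); apply: eq_bigr => k _; rewrite mxE.
Qed.

Lemma gram_det_ratio_le_first_rows1 r n (Hr : (r <= n)%N) (a c : 'I_n -> R)
    (H : 'M[C]_(r, n)) :
  (forall k, 0 < a k) -> (forall k, 0 < c k) ->
  (forall k l : 'I_n, (k <= l)%N -> a l / c l <= a k / c k) -> row_free H ->
  gram_det_ratio a c H <= gram_det_ratio a c (first_rows Hr 1%:M).
Proof.
move=> a_gt0 c_gt0 ac_mono H_free.
have tc_gt0 : 0 < \prod_(k < r) c (widen_ord Hr k) by apply: prodr_gt0.
rewrite gram_det_ratio_first_rows1 /gram_det_ratio fmorph_div.
rewrite ler_pdivrMr ?det_gram_rdiag_gt0 // mulrAC ler_pdivlMr ?ltcR //.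
have fact_gt0C : 0 < r`!%:R :> C by rewrite ltr0n fact_gt0.
rewrite -(ler_pM2l fact_gt0C) mulrA cauchy_binet_gram_rdiag.
rewrite [in X in _ <= X]mulrCA cauchy_binet_gram_rdiag big_distrl big_distrr /=.
apply: ler_sum => g _; set w := \det (colsub g H) * _.
have [g_inj|g_ninj] := boolP (injectiveb g); last first.
  by rewrite /w det_colsub_eq0 // !(mul0r, mulr0).
have w_ge0 : 0 <= w by apply: mul_conjC_ge0.
clearbody w; rewrite mulrAC mulrA -!rmorph_prod -!rmorphM ler_wpM2r //.
by rewrite lecR mulrC prod_inj_cross_le //; apply/injectiveP.
Qed.

End GramDeterminants.

Section Whitening.
Variables (R : realType) (n K : nat) (alpha : 'I_K -> R).
Variables (Q : 'I_K -> 'M[R[i]]_n) (i : 'I_K).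
Hypotheses (Q_psd : forall j, psd (Q j)) (alpha_gt0 : forall j, 0 < alpha j).
Variables (Si S U V : 'M[R[i]]_n) (s : 'I_n -> R).
Hypotheses (Si_sqrt : is_psd_sqrt (Q i) Si).
Hypotheses (S_sqrt : is_psd_sqrt (Qsum alpha Q) S).
Hypothesis (svd : is_svd (Si *m invmx S) U V s).

Lemma id_add_psd_sum_qf_gt0 (P : pred 'I_K) (v : 'rV_n) : v != 0 ->
  0 < (v *m (1%:M + \sum_(j | P j) (alpha j)%:C *: Q j) *m ctrmx v) 0 0.
Proof.
move=> v_neq0.
rewrite mulmxDr mulmxDl mxE mulmx1 mulmx_sumr mulmx_suml summxE ltr_wpDr //.
  apply: sumr_ge0 => j _; rewrite -scalemxAr -scalemxAl mxE.
  by rewrite mulr_ge0 ?qf_psd // ler0c ltW.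
exact: qf_id_gt0.
Qed.

Lemma Rint_qf_gt0 (v : 'rV_n) :
  v != 0 -> 0 < (v *m Defs.Rint alpha Q i *m ctrmx v) 0 0.
Proof.
have -> : Defs.Rint alpha Q i = 1%:M + \sum_(j | j != i) (alpha j)%:C *: Q j.
  by rewrite /Defs.Rint /Qsum (bigD1 i) //= addrCA addrC addrK.
exact: id_add_psd_sum_qf_gt0.
Qed.

Lemma sqrt_Qsum_unit : S \in unitmx.
Proof.
case: S_sqrt => _ SS.
have := qf_pd_unit (id_add_psd_sum_qf_gt0 predT).
by rewrite -/(Qsum alpha Q) -SS unitmx_mul => /andP [].
Qed.

Definition whitening := ctrmx V *m invmx S.

Lemma whitening_Qsum : whitening *m Qsum alpha Q *m ctrmx whitening = 1%:M.
Proof.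
case: S_sqrt => [[S_herm _] SS]; case: svd => _ [_ VV] _ _ _.
rewrite /whitening ctrmxM ctrmx_inv S_herm ctrmxK -SS.
have S_unit := sqrt_Qsum_unit.
by rewrite !mulmxA mulmxKV // -!mulmxA mulKVmx // mulmx1.
Qed.

Lemma whitening_unit : whitening \in unitmx.
Proof.
case: svd => _ [VV _] _ _ _.
by rewrite unitmx_mul unitmx_inv sqrt_Qsum_unit andbT; case: (mulmx1_unit VV).
Qed.

Lemma whitening_Qi :
  whitening *m Q i *m ctrmx whitening = rdiag (fun k => s k ^+ 2).
Proof.
case: Si_sqrt => [[Si_herm _] SiSi]; case: S_sqrt => [[S_herm _] _].
case: svd => [[_ UU] [_ VV] _ _ A_svd].
have AV : Si *m invmx S *m V = U *m rdiag s by rewrite A_svd -mulmxA VV mulmx1.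
have -> : whitening *m Q i *m ctrmx whitening =
    ctrmx (Si *m invmx S *m V) *m (Si *m invmx S *m V).
  by rewrite /whitening -SiSi !ctrmxM ctrmx_inv S_herm Si_herm ctrmxK !mulmxA.
rewrite AV ctrmxM ctrmx_rdiag -mulmxA (mulmxA (ctrmx U)) UU mul1mx rdiag_mul.
by congr diag_mx; apply/rowP => k; rewrite !mxE expr2.
Qed.

Definition eig_Rint k := 1 - alpha i * s k ^+ 2.

Definition eig_RintQi k := eig_Rint k + s k ^+ 2.

Lemma whitening_Rint :
  whitening *m Defs.Rint alpha Q i *m ctrmx whitening = rdiag eig_Rint.
Proof.
rewrite /Defs.Rint mulmxBr mulmxBl -scalemxAr -scalemxAl.
by rewrite whitening_Qsum whitening_Qi subr_scale_rdiag.
Qed.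

Lemma eig_Rint_gt0 k : 0 < eig_Rint k.
Proof.
have e_neq0 : (delta_mx 0 k : 'rV_n) *m whitening != 0.
  rewrite mulmx_free_eq0 ?row_free_unit ?whitening_unit //.
  apply/eqP => /matrixP /(_ 0 k) /eqP.
  by rewrite !mxE !eqxx /= oner_eq0.
rewrite -ltcR; have := Rint_qf_gt0 e_neq0.
rewrite (_ : _ *m _ *m _ = delta_mx 0 k *m (whitening *m Defs.Rint alpha Q i
    *m ctrmx whitening) *m ctrmx (delta_mx 0 k : 'rV_n)); last first.
  by rewrite ctrmxM !mulmxA.
by rewrite whitening_Rint qf_delta !mxE eqxx mulr1n.
Qed.

Lemma eig_RintQi_gt0 k : 0 < eig_RintQi k.
Proof. by rewrite ltr_wpDr ?sqr_ge0 ?eig_Rint_gt0. Qed.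

Lemma eig_ratio_nonincreasing (k l : 'I_n) :
  (k <= l)%N -> eig_RintQi l / eig_Rint l <= eig_RintQi k / eig_Rint k.
Proof.
case: svd => _ _ s_ge0 s_mono _ /s_mono s_kl.
have := eig_Rint_gt0 k; have := eig_Rint_gt0 l.
rewrite ler_pdivrMr ?eig_Rint_gt0 // mulrAC ler_pdivlMr ?eig_Rint_gt0 //.
rewrite /eig_RintQi /eig_Rint => c_l c_k.
have s_kl2 : s l ^+ 2 <= s k ^+ 2 by rewrite ler_pXn2r ?nnegrE ?s_ge0.
nra.
Qed.

Lemma rank_whitened r (G : 'M[R[i]]_(r, n)) : \rank (G *m S *m V) = \rank G.
Proof.
case: svd => _ [VV _] _ _ _; rewrite -mulmxA mxrankMfree // row_free_unit.
by rewrite unitmx_mul sqrt_Qsum_unit; case: (mulmx1_unit VV).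
Qed.

Lemma first_rows_whitened r (Hr : (r <= n)%N) :
  first_rows Hr (ctrmx V) *m invmx S *m S *m V = first_rows Hr 1%:M.
Proof.
case: svd => _ [_ VV] _ _ _.
by rewrite -(mulmxA _ _ S) mulVmx ?sqrt_Qsum_unit // mulmx1 first_rows_mul VV.
Qed.

Lemma Cbar_whitened r (G : 'M[R[i]]_(r, n)) : row_free (G *m S *m V) ->
  Cbar alpha Q i G =
  log2 (complex.Re (gram_det_ratio eig_RintQi eig_Rint (G *m S *m V))).
Proof.
move=> H_free; set H := G *m S *m V.
have G_sandwich M : G *m M *m ctrmx G =
    H *m (whitening *m M *m ctrmx whitening) *m ctrmx H.
  case: svd => _ [VV _] _ _ _.
  have -> : G = H *m whitening.
    rewrite /H /whitening -!mulmxA (mulmxA V) VV mul1mx.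
    by rewrite mulmxV ?sqrt_Qsum_unit ?mulmx1.
  by rewrite ctrmxM !mulmxA.
rewrite /Cbar !G_sandwich whitening_Qi whitening_Rint.
have Y_unit := gram_rdiag_unit eig_Rint_gt0 H_free.
rewrite -[X in X + _](mulmxV Y_unit) -!mulmxDl -mulmxDr rdiag_add.
by rewrite det_mulmx det_inv.
Qed.

End Whitening.

Lemma log2_Re_le (R : realType) (x y : R[i]) :
  0 < x -> x <= y -> log2 (complex.Re x) <= log2 (complex.Re y).
Proof.
rewrite ltcE lecE => /andP [_ Rex_gt0] /andP [_ Rexy].
have Rey_gt0 := lt_le_trans Rex_gt0 Rexy.
rewrite /log2 ler_wpM2r ?invr_ge0 ?ln_ge0 ?ler1n //.
by rewrite ler_ln ?posrE.
Qed.

Theorem lemma1 (R : realType) (Nrx NUE r : nat)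
  (HNrx : (1 <= Nrx)%N) (HNUE : (1 <= NUE)%N)
  (Hr1 : (1 <= r)%N) (Hr : (r <= Nrx)%N)
  (Q : 'I_NUE -> 'M[R[i]]_Nrx) (alpha : 'I_NUE -> R)
  (HQ : forall j, psd (Q j)) (Halpha : forall j, 0 < alpha j)
  (i : 'I_NUE)
  (Si S : 'M[R[i]]_Nrx)
  (HSi : is_psd_sqrt (Q i) Si)
  (HS : is_psd_sqrt (Qsum alpha Q) S)
  (U V : 'M[R[i]]_Nrx) (s : 'I_Nrx -> R)
  (Hsvd : is_svd (Si *m invmx S) U V s) :
  let Gi := first_rows Hr (ctrmx V) *m invmx S in
  \rank Gi = r /\
  forall G : 'M[R[i]]_(r, Nrx), \rank G = r ->
    Cbar alpha Q i G <= Cbar alpha Q i Gi.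
Proof.
move=> Gi.
have rank_GSV := rank_whitened HQ Halpha HS Hsvd.
have GiSV : Gi *m S *m V = first_rows Hr 1%:M.
  by rewrite /Gi (first_rows_whitened HQ Halpha HS Hsvd).
have whitened_free (G : 'M[R[i]]_(r, Nrx)) :
    \rank G = r -> row_free (G *m S *m V).
  by rewrite /row_free rank_GSV => ->.
have rank_Gi : \rank Gi = r.
  by rewrite -rank_GSV GiSV; apply/eqP/first_rows1_free.
split; first exact: rank_Gi.
move=> G rank_G.
rewrite (Cbar_whitened HQ Halpha HSi HS Hsvd (whitened_free _ rank_G)).
rewrite (Cbar_whitened HQ Halpha HSi HS Hsvd (whitened_free _ rank_Gi)) GiSV.
have eig_gt0 := eig_Rint_gt0 HQ Halpha HSi HS Hsvd.
have eigQ_gt0 := eig_RintQi_gt0 HQ Halpha HSi HS Hsvd.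
apply: log2_Re_le; first exact: gram_det_ratio_gt0 (whitened_free G rank_G).
apply: gram_det_ratio_le_first_rows1 => //; last exact: whitened_free.
by move=> k l; apply: (eig_ratio_nonincreasing HQ Halpha HSi HS Hsvd).
Qed.
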